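(* Let $\sigma\in\widehat W$ be such that $\mathrm{ran}(\mathrm{id}-\sigma)$ is an affine hyperplane of $V$, and let \[\xi\in V_\sigma\setminus\bigcup_{I\subsetneq\{0,\dots,l\},\ |I|\ge2}V_{\sigma,I}.\] Then there are two distinct indices $i,i'\in\{0,\dots,l\}$ with $\xi\in V_{\sigma,i}\cap V_{\sigma,i'}$. Furthermore $w=\sigma s_i$ and $w'=\sigma s_{i'}$ both lie in $\widehat W_{\mathrm{reg}}$, one has $V_{w,i}=V_{\sigma,i}$ and $V_{w',i'}=V_{\sigma,i'}$, and the open polytopes $V_w$ and $V_{w'}$ lie on opposite sides of the affine hyperplane $\mathrm{ran}(\mathrm{id}-\sigma)$.
   Context: $V$ is a finite-dimensional real Euclidean space, $W$ an irreducible Weyl group acting on $V$ with simple roots $\alpha_1,\dots,\alpha_l$, highest root $\alpha_{\max}$, $\alpha_0:=-\alpha_{\max}$, $\alpha^\vee=2\alpha/\langle\alpha,\alpha\rangle$. Alcove $A=\{x\mid\langle\alpha_i,x\rangle+\delta_{i,0}>0,\ i=0,\dots,l\}$; for a proper subset $I\subsetneq\{0,\dots,l\}$ the face $A_I$ is given by equalities $\langle\alpha_i,x\rangle+\delta_{i,0}=0$ for $i\in I$ and strict inequalities for $i\notin I$; $A_i=A_{\{i\}}$. $\widehat W$ is generated by $s_i(x)=x-(\langle\alpha_i,x\rangle+\delta_{i,0})\alpha_i^\vee$, $i=0,\dots,l$. For $w\in\widehat W$, $\tilde w(x)=w(x)-w(0)$, $V_w=(\mathrm{id}-w)(A)$,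 $V_{w,I}=(\mathrm{id}-w)(A_I)$, $V_{w,i}=V_{w,\{i\}}$, where $(\mathrm{id}-w)(x)=x-w(x)$. $\widehat W_{\mathrm{reg}}=\{w\mid\mathrm{id}-\tilde w\text{ invertible}\}$. *)

From HB Require Import structures.
From mathcomp Require Import all_boot all_order all_algebra.
Set Implicit Arguments. Unset Strict Implicit. Unset Printing Implicit Defensive.
Import Order.TTheory GRing.Theory Num.Theory.
Local Open Scope ring_scope.

Section Defs.
Variables (R : realFieldType) (n : nat).
Local Notation V := 'rV[R]_n.

Definition dot (u v : V) : R := \sum_(k < n) u 0 k * v 0 k.
Definition coroot (a : V) : V := (2 / dot a a) *: a.
Definition refl (a x : V) : V := x - dot a x *: coroot a.

Definition root_system (Phi : seq V) : Prop :=
  [/\ 0 \notin Phi,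
      forall a b, a \in Phi -> b \in Phi -> refl a b \in Phi,
      forall a b, a \in Phi -> b \in Phi ->
        exists z : int, dot b (coroot a) = z%:~R
    & forall a (c : R), a \in Phi -> c *: a \in Phi -> c = 1 \/ c = -1].

Definition int_comb (alpha : 'I_n -> V) (c : 'I_n -> int) : V :=
  \sum_(k < n) (c k)%:~R *: alpha k.

(* alpha_1..alpha_l (l = n = dim V) is a system of simple roots of Phi *)
Definition simple_system (Phi : seq V) (alpha : 'I_n -> V) : Prop :=
  [/\ forall k, alpha k \in Phi,
      forall c : 'I_n -> R, \sum_(k < n) c k *: alpha k = 0 -> forall k, c k = 0
    & forall b, b \in Phi -> exists c : 'I_n -> int,
        b = int_comb alpha c /\ ((forall k, 0 <= c k) \/ (forall k, c k <= 0))].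

Definition irreducible_simple (alpha : 'I_n -> V) : Prop :=
  forall S : {set 'I_n},
    (forall i j, i \in S -> j \notin S -> dot (alpha i) (alpha j) = 0) ->
    S = set0 \/ S = setT.

Definition highest_root (Phi : seq V) (alpha : 'I_n -> V) (amax : V) : Prop :=
  amax \in Phi /\
  forall b, b \in Phi -> exists c : 'I_n -> int,
    (forall k, 0 <= c k) /\ amax - b = int_comb alpha c.

Definition irreducible_root_datum Phi alpha amax : Prop :=
  [/\ root_system Phi, simple_system Phi alpha, irreducible_simple alpha
    & highest_root Phi alpha amax].

(* affine indices 0..l as 'I_n.+1 ; index 0 <-> alpha_0 = -amax *)
Definition aroot (alpha : 'I_n -> V) (amax : V) (j : 'I_n.+1) : V :=
  match unlift ord0 j with Some k => alpha k | None => - amax end.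
Definition adelta (j : 'I_n.+1) : R := (j == ord0)%:R.
Definition aff alpha amax (j : 'I_n.+1) (x : V) : R :=
  dot (aroot alpha amax j) x + adelta j.
Definition sref alpha amax (j : 'I_n.+1) (x : V) : V :=
  x - aff alpha amax j x *: coroot (aroot alpha amax j).
(* the element s_{j1} o ... o s_{jk} of the affine Weyl group for word [:: j1; ..; jk] *)
Definition wordmap alpha amax (ws : seq 'I_n.+1) (x : V) : V :=
  foldr (fun j y => sref alpha amax j y) x ws.

Definition alcove alpha amax (x : V) : Prop :=
  forall j, 0 < aff alpha amax j x.
Definition face alpha amax (I : {set 'I_n.+1}) (x : V) : Prop :=
  forall j, if j \in I then aff alpha amax j x = 0 else 0 < aff alpha amax j x.

Definition Vimg (w : V -> V) (P : V -> Prop) (y : V) : Prop :=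
  exists2 x, P x & y = x - w x.
Definition ran_id_minus (w : V -> V) (y : V) : Prop := exists x, y = x - w x.
Definition tilde (w : V -> V) (x : V) : V := w x - w 0.
Definition regular (w : V -> V) : Prop := bijective (fun x => x - tilde w x).
Definition affine_hyperplane (S : V -> Prop) : Prop :=
  exists a c, a != 0 /\ forall y, S y <-> dot a y = c.

End Defs.

(* Write sigma = L + sigma(0) with L the linear part, an orthogonal map, and let
   ran(id - sigma) = {y | <a, y> = c}.  Since <a, x - L x> is constant, a is
   orthogonal to ran(id - L), so L a = a: sigma commutes with translations along
   a, and ran(id - L) = a^perp, so the fixed space of L is the line R a.

   Given xi = x0 - sigma x0 with x0 in the alcove A, every point x0 + t a has the
   same image xi.  As alpha_0, ..., alpha_l positively span V (the highest root
   has positive coefficients), the ray x0 + t a leaves A through a proper face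
   A_I, on a wall alpha_i with <alpha_i, a> < 0; the hypothesis on xi forces
   I = {i}.  The ray in direction -a gives a wall i' with <alpha_i', a> > 0.
   Finally, for w = sigma s_j one computes
     <a, x - w x> = c + (<alpha_j, x> + delta_j0) (2/|alpha_j|^2) <alpha_j, a>,
   which places V_w on the side of the hyperplane given by the sign of
   <alpha_j, a>, and w is regular because a fixed vector of L s_{alpha_j} must be
   a multiple of a orthogonal to alpha_j.  Since s_j fixes A_j pointwise,
   V_{w,j} = V_{sigma,j}. *)

From HB Require Import structures.
From mathcomp Require Import all_boot all_order all_algebra ring.
Set Implicit Arguments. Unset Strict Implicit. Unset Printing Implicit Defensive.
Import Order.TTheory GRing.Theory Num.Theory.
Local Open Scope ring_scope.

Section InnerProduct.
Variables (R : realFieldType) (n : nat).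
Local Notation V := 'rV[R]_n.
Implicit Types u v w : V.

Lemma dotC u v : dot u v = dot v u.
Proof. by apply: eq_bigr => k _; rewrite mulrC. Qed.

Lemma dotDr u v w : dot u (v + w) = dot u v + dot u w.
Proof. by rewrite /dot -big_split; apply: eq_bigr => k _; rewrite mxE mulrDr. Qed.

Lemma dotZr u v (c : R) : dot u (c *: v) = c * dot u v.
Proof. by rewrite /dot mulr_sumr; apply: eq_bigr => k _; rewrite mxE mulrCA. Qed.

Lemma dotNr u v : dot u (- v) = - dot u v.
Proof. by rewrite -scaleN1r dotZr mulN1r. Qed.

Lemma dotBr u v w : dot u (v - w) = dot u v - dot u w.
Proof. by rewrite dotDr dotNr. Qed.

Lemma dot0r u : dot u 0 = 0.
Proof. by rewrite -(scale0r (0 : V)) dotZr mul0r. Qed.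

Lemma dot0l u : dot 0 u = 0.
Proof. by rewrite dotC dot0r. Qed.

Lemma dotDl u v w : dot (v + w) u = dot v u + dot w u.
Proof. by rewrite dotC dotDr !(dotC u). Qed.

Lemma dotZl u v (c : R) : dot (c *: v) u = c * dot v u.
Proof. by rewrite dotC dotZr dotC. Qed.

Lemma dotNl u v : dot (- v) u = - dot v u.
Proof. by rewrite dotC dotNr dotC. Qed.

Lemma dotBl u v w : dot (v - w) u = dot v u - dot w u.
Proof. by rewrite dotDl dotNl. Qed.

Lemma dot_suml (I : Type) (r : seq I) (F : I -> V) u :
  dot (\sum_(i <- r) F i) u = \sum_(i <- r) dot (F i) u.
Proof.
elim: r => [|x r IH]; first by rewrite !big_nil dot0l.
by rewrite !big_cons dotDl IH.
Qed.

Lemma dot_ge0 u : 0 <= dot u u.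
Proof. by apply: sumr_ge0 => k _; rewrite -expr2 sqr_ge0. Qed.

Lemma dot_eq0 u : dot u u = 0 -> u = 0.
Proof.
move=> u0; apply/rowP => k; rewrite mxE.
have sq_ge0 i : xpredT i -> 0 <= u 0 i * u 0 i by rewrite -expr2 sqr_ge0.
have := psumr_eq0P sq_ge0 u0 (i := k) isT.
by move/eqP; rewrite mulf_eq0 orbb => /eqP.
Qed.

Lemma dot_gt0 u : u != 0 -> 0 < dot u u.
Proof. by move=> u0; rewrite lt_def dot_ge0 andbT; apply: contraNneq u0 => /dot_eq0 ->. Qed.
End InnerProduct.

Section Reflection.
Variables (R : realFieldType) (n : nat).
Local Notation V := 'rV[R]_n.
Implicit Types a x y : V.

Lemma reflD a x y : refl a (x + y) = refl a x + refl a y.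
Proof. by rewrite /refl dotDr scalerDl opprD addrACA. Qed.

Lemma reflZ a (k : R) x : refl a (k *: x) = k *: refl a x.
Proof. by rewrite /refl dotZr -scalerA scalerBr. Qed.

Lemma reflB a x y : refl a (x - y) = refl a x - refl a y.
Proof. by rewrite reflD -scaleN1r reflZ scaleN1r. Qed.

Lemma refl_id a x : dot a x = 0 -> refl a x = x.
Proof. by move=> ax; rewrite /refl ax scale0r subr0. Qed.

Lemma dot_coroot a v : dot v (coroot a) = 2 / dot a a * dot a v.
Proof. by rewrite /coroot dotZr dotC. Qed.

Lemma refl_dot a x y : dot (refl a x) (refl a y) = dot x y.
Proof.
have [-> | a0] := eqVneq a 0; first by rewrite /refl /coroot !scaler0 !subr0.
have aa0 : dot a a != 0 by rewrite gt_eqF ?dot_gt0.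
rewrite /refl /coroot !dotBl !dotBr !dotZl !dotZr (dotC x a).
by field.
Qed.
End Reflection.

Section LinearAlgebra.
Variables (R : realFieldType) (n : nat).
Local Notation V := 'rV[R]_n.
Implicit Types a v x y : V.

Lemma linear_inj_bij (f : V -> V) :
  (forall x y, f (x + y) = f x + f y) -> (forall (k : R) x, f (k *: x) = k *: f x) ->
  (forall x, f x = 0 -> x = 0) -> bijective f.
Proof.
move=> fD fZ f_inj.
pose M := \matrix_(i, j) f (delta_mx 0 i) 0 j.
have fM x : f x = x *m M.
  have f0 : f 0 = 0 by have := fZ 0 0; rewrite !scale0r.
  rewrite mulmx_sum_row {1}(row_sum_delta x) (big_morph f fD f0).
  by apply: eq_bigr => i _; rewrite fZ; congr (_ *: _); apply/rowP => j; rewrite !mxE.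
have uM : M \in unitmx.
  by rewrite -row_free_unit; apply: inj_row_free => v; rewrite -fM => /f_inj.
by exists (mulmx^~ (invmx M)) => x; rewrite fM ?mulmxK ?mulmxKV.
Qed.

Lemma orth_basis_eq0 (e : 'I_n -> V) :
  (forall c : 'I_n -> R, \sum_(k < n) c k *: e k = 0 -> forall k, c k = 0) ->
  forall v, (forall k, dot (e k) v = 0) -> v = 0.
Proof.
move=> e_free v ev.
pose M := \matrix_(k, j) e k 0 j.
have uM : M \in unitmx.
  rewrite -row_free_unit; apply: inj_row_free => x; rewrite mulmx_sum_row => x0.
  apply/rowP => k; rewrite mxE; apply: (e_free (fun k => x 0 k)) k.
  rewrite -[RHS]x0; apply: eq_bigr => i _; congr (_ *: _).
  by apply/rowP => j; rewrite !mxE.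
have : v *m M^T = 0.
  apply/rowP => k; rewrite !mxE -[RHS](ev k) /dot.
  by apply: eq_bigr => j _; rewrite !mxE mulrC.
by move/(congr1 (mulmx^~ (invmx M^T))); rewrite mulmxK ?unitmx_tr // mul0mx.
Qed.

Variable L : V -> V.
Hypothesis L_dot : forall x y, dot (L x) (L y) = dot x y.

Lemma orth_range_fixed a : (forall x, dot a (x - L x) = 0) -> L a = a.
Proof.
move=> a_orth; have /eqP := a_orth a; rewrite dotBr subr_eq0 => /eqP aLa.
apply/eqP; rewrite -subr_eq0; apply/eqP/dot_eq0.
by rewrite !dotBl !dotBr L_dot (dotC (L a) a) -aLa !subrr.
Qed.

Lemma fixed_orth_range a x : L a = a -> dot a (x - L x) = 0.
Proof. by move=> La; rewrite dotBr -{2}La L_dot subrr. Qed.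
End LinearAlgebra.

Section AffineWeylGroup.
Variables (R : realFieldType) (n : nat).
Local Notation V := 'rV[R]_n.
Implicit Types x y : V.
Variables (alpha : 'I_n -> V) (amax : V).
Local Notation ar := (aroot alpha amax).

Definition wlin (ws : seq 'I_n.+1) (x : V) : V :=
  foldr (fun j y => refl (ar j) y) x ws.

Lemma wlinD ws x y : wlin ws (x + y) = wlin ws x + wlin ws y.
Proof. by elim: ws => //= j ws ->; rewrite reflD. Qed.

Lemma wlinZ ws (k : R) x : wlin ws (k *: x) = k *: wlin ws x.
Proof. by elim: ws => //= j ws ->; rewrite reflZ. Qed.

Lemma wlinB ws x y : wlin ws (x - y) = wlin ws x - wlin ws y.
Proof. by elim: ws => //= j ws ->; rewrite reflB. Qed.

Lemma wlin_dot ws x y : dot (wlin ws x) (wlin ws y) = dot x y.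
Proof. by elim: ws => //= j ws <-; rewrite refl_dot. Qed.

Lemma srefE j x : sref alpha amax j x = refl (ar j) x + sref alpha amax j 0.
Proof. by rewrite /sref /refl /aff dot0r !add0r scalerDl opprD addrA. Qed.

Lemma wordmapE ws x : wordmap alpha amax ws x = wlin ws x + wordmap alpha amax ws 0.
Proof.
elim: ws => [|j ws IH] /=; first by rewrite /wordmap /= addr0.
rewrite /wordmap /= -/(wordmap alpha amax ws x) -/(wordmap alpha amax ws 0).
by rewrite IH srefE reflD -addrA [in RHS]srefE.
Qed.

Lemma sref_face j x : face alpha amax [set j] x -> sref alpha amax j x = x.
Proof. by move=> /(_ j); rewrite set11 => /= aj0; rewrite /sref aj0 scale0r subr0. Qed.

Lemma Vimg_sref_face (w : V -> V) j y :
  Vimg (fun x => w (sref alpha amax j x)) (face alpha amax [set j]) y <->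
  Vimg w (face alpha amax [set j]) y.
Proof. by split=> -[x xj ->]; exists x; rewrite ?sref_face. Qed.
End AffineWeylGroup.

Section AffineSimpleRoots.
Variables (R : realFieldType) (n : nat).
Local Notation V := 'rV[R]_n.
Variables (Phi : seq V) (alpha : 'I_n -> V) (amax : V).
Local Notation ar := (aroot alpha amax).
Hypothesis simple : simple_system Phi alpha.
Hypothesis highest : highest_root Phi alpha amax.

Lemma highest_root_pos : exists c : 'I_n -> R,
  amax = \sum_k c k *: alpha k /\ forall k, 0 < c k.
Proof.
case: simple => alpha_in alpha_free comb; case: highest => amax_in amax_top.
have [c [Ec _]] := comb _ amax_in.
exists (fun k => (c k)%:~R); split => // k.
have [d [d_ge0 Ed]] := amax_top _ (alpha_in k).
have Ek : alpha k = \sum_j (j == k)%:R *: alpha j.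
  rewrite (bigD1 k) //= eqxx scale1r big1 ?addr0 // => j /negbTE ->.
  by rewrite scale0r.
have := alpha_free (fun j => (c j)%:~R - (j == k)%:R - (d j)%:~R).
have -> : \sum_j ((c j)%:~R - (j == k)%:R - (d j)%:~R) *: alpha j = 0.
  transitivity (amax - alpha k - int_comb alpha d); last by rewrite Ed subrr.
  rewrite Ec {1}Ek /int_comb -!sumrB.
  by apply: eq_bigr => j _; rewrite !scalerBl.
move=> /(_ erefl k) /eqP; rewrite eqxx subr_eq0 subr_eq => /eqP ->.
by rewrite ltr_wpDl ?ler0z // ltr01.
Qed.

Lemma exists_neg_aroot a : a != 0 -> exists j, dot (ar j) a < 0.
Proof.
move=> a0; apply/existsP; apply: contraNT a0; rewrite negb_exists => /forallP a_ge0.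
have {}a_ge0 j : 0 <= dot (ar j) a by rewrite leNgt a_ge0.
have [c [Ec c_gt0]] := highest_root_pos.
have term_ge0 k : true -> 0 <= c k * dot (alpha k) a.
  move=> _; have := a_ge0 (lift ord0 k); rewrite /aroot liftK.
  by apply: mulr_ge0; rewrite ltW.
have sum0 : \sum_k c k * dot (alpha k) a = 0.
  apply/eqP; rewrite eq_le sumr_ge0 // andbT -oppr_ge0.
  have := a_ge0 ord0; rewrite /aroot unlift_none dotNl Ec dot_suml.
  by under eq_bigr do rewrite dotZl.
apply/eqP; case: simple => _ alpha_free _; apply: (orth_basis_eq0 alpha_free) => k.
have /eqP := psumr_eq0P term_ge0 sum0 (i := k) isT.
by rewrite mulf_eq0 gt_eqF // => /eqP.
Qed.
End AffineSimpleRoots.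

Section RayExit.
Variables (R : realFieldType) (n : nat).
Local Notation V := 'rV[R]_n.
Variables (alpha : 'I_n -> V) (amax : V).
Local Notation ar := (aroot alpha amax).
Local Notation af := (aff alpha amax).

Lemma aff_shift j x t (b : V) : af j (x + t *: b) = af j x + t * dot (ar j) b.
Proof. by rewrite /aff dotDr dotZr addrAC. Qed.

Lemma ray_exit x0 (b : V) j1 j2 :
  alcove alpha amax x0 -> dot (ar j1) b < 0 -> 0 < dot (ar j2) b ->
  exists t (I : {set 'I_n.+1}) i,
    [/\ face alpha amax I (x0 + t *: b), I != setT, i \in I & dot (ar i) b < 0].
Proof.
move=> x0A bj1 bj2; pose d j := dot (ar j) b.
have [i bi tmin] := @arg_minP _ _ _ j1 (fun j => d j < 0) (fun j => af j x0 / - d j) bj1.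
pose t := af i x0 / - d i; pose p := x0 + t *: b.
have t_gt0 : 0 < t by rewrite divr_gt0 ?oppr_gt0.
have afi : af i p = 0.
  by rewrite aff_shift /t invrN mulrN mulNr -mulrA mulVf ?mulr1 ?subrr ?ltr0_neq0.
have af_ge0 j : 0 <= af j p.
  rewrite aff_shift; case: (ltP (d j) 0) => dj.
    by move: (tmin j dj); rewrite -/t ler_pdivlMr ?oppr_gt0 // mulrN -subr_ge0 opprK.
  by rewrite addr_ge0 ?(ltW (x0A j)) // mulr_ge0 // ltW.
exists t, [set j | af j p == 0], i; split; rewrite ?inE ?afi //.
- by move=> j; rewrite inE; case: eqVneq => // ?; rewrite lt_def af_ge0 andbT.
- apply/negP => /eqP IT; have := in_setT j2; rewrite -IT inE aff_shift gt_eqF //.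
  by rewrite addr_gt0 // mulr_gt0.
Qed.
End RayExit.

Section HyperplaneRange.
Variables (R : realFieldType) (n : nat).
Local Notation V := 'rV[R]_n.
Implicit Types x y v : V.
Variables (alpha : 'I_n -> V) (amax : V) (ws : seq 'I_n.+1).
Local Notation ar := (aroot alpha amax).
Local Notation af := (aff alpha amax).
Local Notation sigma := (wordmap alpha amax ws).
Local Notation L := (wlin alpha amax ws).
Local Notation s := (sref alpha amax).
Variables (a : V) (c : R).
Hypothesis a0 : a != 0.
Hypothesis range_sigma : forall y, ran_id_minus sigma y <-> dot a y = c.

Let on_range x : dot a (x - sigma x) = c.
Proof. by apply/range_sigma; exists x. Qed.

Lemma normal_fixed : L a = a.
Proof.
apply: (orth_range_fixed (@wlin_dot _ _ _ _ ws)) => x.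
have -> : x - L x = (x - sigma x) - (0 - sigma 0).
  by rewrite [sigma x]wordmapE sub0r opprK opprD addrA subrK.
by rewrite dotBr !on_range subrr.
Qed.

Lemma sigma_shift x t : sigma (x + t *: a) = sigma x + t *: a.
Proof. by rewrite wordmapE wlinD wlinZ normal_fixed [sigma x]wordmapE addrAC. Qed.

Lemma orth_normal_range y : dot a y = 0 -> exists x, y = x - L x.
Proof.
move=> ay; have /range_sigma [x] : dot a (y - sigma 0) = c.
  by rewrite dotBr ay -(on_range 0) !sub0r dotNr.
rewrite [sigma x]wordmapE opprD addrA => /(congr1 (+%R^~ (sigma 0))).
by rewrite /= !subrK => ->; exists x.
Qed.

Lemma fixed_parallel v : L v = v -> v = (dot a v / dot a a) *: a.
Proof.
move=> Lv; have aa0 : dot a a != 0 by rewrite gt_eqF ?dot_gt0.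
pose y := v - (dot a v / dot a a) *: a.
have ay : dot a y = 0 by rewrite dotBr dotZr mulfVK ?subrr.
have vy : dot v y = 0.
  by have [x ->] := orth_normal_range ay; apply: fixed_orth_range; [exact: wlin_dot|].
apply/eqP; rewrite -subr_eq0 -/y; apply/eqP/dot_eq0.
by rewrite {1}/y dotBl dotZl vy ay mulr0 subrr.
Qed.

Lemma dot_normal_wlin y : dot a (L y) = dot a y.
Proof. by rewrite -{1}normal_fixed wlin_dot. Qed.

Lemma side_sigma_sref j x :
  dot a (x - sigma (s j x)) = c + af j x * (2 / dot (ar j) (ar j) * dot (ar j) a).
Proof.
rewrite wordmapE dotBr dotDr dot_normal_wlin -(on_range 0) /sref !dotBr dotZr dot_coroot.
by rewrite dot0r; ring.
Qed.

Lemma side_sigma_sref_gt j x :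
  alcove alpha amax x -> (c < dot a (x - sigma (s j x))) = (0 < dot (ar j) a).
Proof.
move=> xA; rewrite side_sigma_sref.
have [-> | j0] := eqVneq (ar j) 0.
  by rewrite !dot0l !mulr0 addr0 !ltxx.
by rewrite ltrDl (pmulr_rgt0 _ (xA j)) pmulr_rgt0 ?divr_gt0 ?dot_gt0.
Qed.

Lemma side_sigma_sref_lt j x :
  alcove alpha amax x -> (dot a (x - sigma (s j x)) < c) = (dot (ar j) a < 0).
Proof.
move=> xA; rewrite side_sigma_sref.
have [-> | j0] := eqVneq (ar j) 0.
  by rewrite !dot0l !mulr0 addr0 !ltxx.
by rewrite gtrDl (pmulr_rlt0 _ (xA j)) pmulr_rlt0 ?divr_gt0 ?dot_gt0.
Qed.

(* sigma s_j is regular as soon as the wall of alpha_j is not parallel to a: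
   a fixed vector v of L s_{alpha_j} is orthogonal to alpha_j, hence fixed by L,
   hence parallel to a, hence zero *)
Lemma regular_sigma_sref j : dot (ar j) a != 0 -> regular (fun x => sigma (s j x)).
Proof.
move=> ja; have tildeE x : tilde (fun x => sigma (s j x)) x = L (refl (ar j) x).
  rewrite /tilde wordmapE [sigma (s j 0)]wordmapE opprD addrACA subrr addr0.
  by rewrite -wlinB [s j x]srefE addrK.
suff : bijective (fun x => x - L (refl (ar j) x)).
  by move=> bij; apply: (eq_bij bij) => x; rewrite tildeE.
apply: linear_inj_bij => [x y | k x | v /eqP].
- by rewrite reflD wlinD opprD addrACA.
- by rewrite reflZ wlinZ scalerBr.
rewrite subr_eq0 => /eqP Ev.
have jv : dot (ar j) v = 0.
  have j0 : ar j != 0 by apply: contraNneq ja => ->; rewrite dot0l.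
  have K0 : 2 / dot (ar j) (ar j) * dot (ar j) a != 0.
    by rewrite mulf_neq0 // gt_eqF // divr_gt0 ?dot_gt0.
  have /eqP := dot_normal_wlin (refl (ar j) v); rewrite -Ev /refl dotBr dotZr.
  by rewrite dot_coroot -subr_eq0 opprB addrC subrK mulf_eq0 (negbTE K0) orbF => /eqP.
have Lv : L v = v by rewrite {2}Ev refl_id.
move: jv; rewrite (fixed_parallel Lv) dotZr => /eqP.
by rewrite mulf_eq0 (negbTE ja) orbF => /eqP ->; rewrite scale0r.
Qed.
End HyperplaneRange.

Section SingleWall.
Variables (R : realFieldType) (n : nat).
Local Notation V := 'rV[R]_n.
Variables (Phi : seq V) (alpha : 'I_n -> V) (amax : V) (sigma : V -> V) (b : V).
Hypothesis simple : simple_system Phi alpha.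
Hypothesis highest : highest_root Phi alpha amax.
Hypothesis b0 : b != 0.
Hypothesis sigma_shift : forall x t, sigma (x + t *: b) = sigma x + t *: b.

(* If xi = (id - sigma)(x0) with x0 in the alcove, then xi is also the image of
   the point where the ray x0 + t b exits the alcove; when xi avoids the images
   of all faces of codimension >= 2, that point lies on a single wall A_i. *)
Lemma single_wall x0 :
  alcove alpha amax x0 ->
  (forall I : {set 'I_n.+1}, I != setT -> (2 <= #|I|)%N ->
     ~ Vimg sigma (face alpha amax I) (x0 - sigma x0)) ->
  exists i, dot (aroot alpha amax i) b < 0 /\
            Vimg sigma (face alpha amax [set i]) (x0 - sigma x0).
Proof.
move=> x0A no_small_face.
have [j1 bj1] := exists_neg_aroot simple highest b0.
have Nb0 : - b != 0 by rewrite oppr_eq0.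
have [j2] := exists_neg_aroot simple highest Nb0; rewrite dotNr oppr_lt0 => bj2.
have [t [I [i [pI IT iI bi]]]] := ray_exit x0A bj1 bj2.
have VI : Vimg sigma (face alpha amax I) (x0 - sigma x0).
  by exists (x0 + t *: b); rewrite // sigma_shift opprD addrACA subrr addr0.
have I_le1 : (#|I| <= 1)%N by rewrite leqNgt; apply/negP => /(no_small_face I IT).
have eI : [set i] = I by apply/eqP; rewrite eqEcard sub1set iI cards1.
by exists i; rewrite eI.
Qed.
End SingleWall.

Unset Implicit Arguments.
Set Strict Implicit.

Theorem proposition3p3 (R : realFieldType) (n : nat) (Phi : seq 'rV[R]_n)
    (alpha : 'I_n -> 'rV[R]_n) (amax : 'rV[R]_n) (ws : seq 'I_n.+1)
    (xi : 'rV[R]_n) :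
  irreducible_root_datum Phi alpha amax ->
  let sigma := wordmap alpha amax ws in
  let s := sref alpha amax in
  let A := alcove alpha amax in
  let A_ := face alpha amax in
  affine_hyperplane (ran_id_minus sigma) ->
  Vimg sigma A xi ->
  (forall I : {set 'I_n.+1}, I != setT -> (2 <= #|I|)%N -> ~ Vimg sigma (A_ I) xi) ->
  exists i i' : 'I_n.+1,
    [/\ i != i', Vimg sigma (A_ [set i]) xi, Vimg sigma (A_ [set i']) xi
      & let w := fun x => sigma (s i x) in
        let w' := fun x => sigma (s i' x) in
        [/\ regular w, regular w',
            forall y, Vimg w (A_ [set i]) y <-> Vimg sigma (A_ [set i]) y,
            forall y, Vimg w' (A_ [set i']) y <-> Vimg sigma (A_ [set i']) y
          & exists a c, [/\ a != 0,
              forall y, ran_id_minus sigma y <-> dot a y = c,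
              forall y, Vimg w A y -> c < dot a y
              & forall y, Vimg w' A y -> dot a y < c]]].
Proof.
move=> [_ simple _ highest] sigma s A A_ [a [c [a0 range_sigma]]] [x0 x0A ->] no_small_face.
have shift := sigma_shift range_sigma.
have shiftN x t : sigma (x + t *: - a) = sigma x + t *: - a.
  by rewrite /sigma scalerN -scaleNr shift scaleNr.
have Na0 : - a != 0 by rewrite oppr_eq0.
have [i' [ai' wall_i']] := single_wall simple highest a0 shift x0A no_small_face.
have [i [ai wall_i]] := single_wall simple highest (b := - a) Na0 shiftN x0A no_small_face.
rewrite dotNr oppr_lt0 in ai.
exists i, i'; split => //.
  by apply: contraTneq ai => ->; rewrite -leNgt ltW.
split.
- exact: (regular_sigma_sref a0 range_sigma (lt0r_neq0 ai)).
- exact: (regular_sigma_sref a0 range_sigma (ltr0_neq0 ai')).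
- exact: Vimg_sref_face.
- exact: Vimg_sref_face.
exists a, c; split => // _ [x xA ->].
- by rewrite (side_sigma_sref_gt range_sigma).
- by rewrite (side_sigma_sref_lt range_sigma).
Qed.
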